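(* Let $\Omega=[\alpha,\beta]$ with $\alpha<\beta$, let $F$ be an $\Omega$-tropical polynomial with set of non-smooth points $H\subset(\alpha,\beta)$ and multiplicity function $\mu$, let $p\in(\alpha,\beta)\setminus H$, and let $(a,b)$ be the connected component of $(\alpha,\beta)\setminus H$ containing $p$ (so each of $a,b$ is either a point of $H$ or an endpoint of $\Omega$). Put $c=\min(p-a,\,b-p)$. Then $G_pF$ is an $\Omega$-tropical polynomial, and its multiset of non-smooth points (points counted with multiplicity) is obtained from that of $F$ by removing one copy of $a$ if $a\neq\alpha$, removing one copy of $b$ if $b\neq\beta$, and adding one copy of $a+c$ and one copy of $b-c$ (so that if $a+c=b-c$, i.e. $p=(a+b)/2$, a point $p$ of multiplicity $2$ is added). Equivalently, with $M_F:\Omega\to\mathbb{Z}_{\ge0}\cup\{\infty\}$ defined by $M_F(\alpha)=M_F(\beta)=\infty$, $M_F=\mu$ on $H$ and $M_F=0$ on $(\alpha,\beta)\setminus H$, one has $M_{G_pF}(x)=M_F(x)-\delta_{a,x}-\delta_{b,x}+\delta_{a+c,x}+\delta_{b-c,x}$ for all $x\in\Omega$ (Kronecker deltas, with $\infty-1=\infty$).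
   Context: Let $\Omega=[\alpha,\beta]$ be a compact interval with $\alpha<\beta$. An $\Omega$-tropical series is a function $F:\Omega\to[0,\infty)$ with $F(\alpha)=F(\beta)=0$ that can be written as $F(z)=\inf_{v\in\mathbb{Z}}(a_v+zv)$ for some real numbers $a_v$; its canonical coefficients are $a_v=\sup_{z\in\Omega}(F(z)-zv)$. Such $F$ is concave piecewise linear with integer slopes; its set $H$ of non-smooth points is the set of points of $(\alpha,\beta)$ where $F$ is not differentiable, with multiplicity $\mu(h)=F'(h^-)-F'(h^+)\in\mathbb{Z}_{\ge1}$. An $\Omega$-tropical polynomial is an $\Omega$-tropical series with finite $H$. For $p\in(\alpha,\beta)$ the operator $G_p$ is defined as follows: if $F$ is not differentiable at $p$, then $G_pF=F$; otherwise there is a unique $w\in\mathbb{Z}$ with $F(z)=a_w+zw$ near $p$ ($a_v$ canonical coefficients of $F$), and $G_pF(z)=\inf_{v\in\mathbb{Z}}(b_v+zv)$ for $z\in\Omega$, where $b_v=a_v$ for $v\neq w$ and $b_w=\min_{v\in\mathbb{Z}\setminus\{w\}}(a_v+pv)-pw$. *)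

From HB Require Import structures.
From mathcomp Require Import all_boot all_order all_algebra.
From mathcomp Require Import all_classical all_reals all_analysis.
Set Implicit Arguments. Unset Strict Implicit. Unset Printing Implicit Defensive.
Import Order.TTheory GRing.Theory Num.Theory.
Import numFieldNormedType.Exports.
Local Open Scope classical_set_scope.
Local Open Scope ring_scope.

Section Trop.
Variable R : realType.
Implicit Types (al be p h z x : R) (F : R -> R).

Definition is_glb (S : set R) (x : R) : Prop :=
  (forall y, S y -> x <= y) /\ (forall m, (forall y, S y -> m <= y) -> m <= x).

Definition Omega al be : set R := [set z | al <= z <= be].

Definition trop_series al be F : Prop :=
  (forall z, Omega al be z -> 0 <= F z) /\ F al = 0 /\ F be = 0 /\
  exists a : int -> R, forall z, Omega al be z ->
    is_glb [set a v + z * v%:~R | v in [set: int]] (F z).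

Definition nonsmooth al be F : set R :=
  [set h | al < h < be /\ ~ derivable F h 1].

Definition trop_poly al be F : Prop :=
  trop_series al be F /\ finite_set (nonsmooth al be F).

Definition canon al be F (v : int) : R :=
  sup [set F z - z * v%:~R | z in Omega al be].

Definition lderiv F h : R := lim ((fun x => (F x - F h) / (x - h)) @ h^'-).
Definition rderiv F h : R := lim ((fun x => (F x - F h) / (x - h)) @ h^'+).
Definition mult F h : R := lderiv F h - rderiv F h.

Definition Gp al be p F : R -> R :=
  if `[< derivable F p 1 >] then
    let a := canon al be F in
    let w := xget 0%R [set w : int |
               \forall z \near p, F z = a w + z * w%:~R] in
    let b := fun v : int => if v == w then
               inf [set a u + p * u%:~R | u in [set u : int | u != w]] - p * w%:~R
             else a v in
    fun z => inf [set b v + z * v%:~R | v in [set: int]]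
  else F.

Definition MF al be F (x : R) : \bar R :=
  if (x == al) || (x == be) then +oo%E
  else if `[< nonsmooth al be F x >] then (mult F x)%:E
  else 0%E.

Definition kdelta (y x : R) : \bar R := ((y == x)%:R : R)%:E.

End Trop.

From Pilot Require Import Defs.
From HB Require Import structures.
From mathcomp Require Import all_boot all_order all_algebra.
From mathcomp Require Import all_classical all_reals all_analysis.
From mathcomp Require Import ring lra zify.
Import Order.TTheory GRing.Theory Num.Theory.
Import numFieldNormedType.Exports.
Local Open Scope classical_set_scope.
Local Open Scope ring_scope.
Set Implicit Arguments. Unset Strict Implicit. Unset Printing Implicit Defensive.

(* On the component (a, b) of smooth points containing p, F coincides with a single
   line of slope w.  At an end point other than alpha or beta the slope of F jumps by at
   least one, so the lines of slope w + 1 through (a, F a) and of slope w - 1 through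
   (b, F b) lie above F; hence the lowest competitor of the line w at p lies exactly
   c = min(p - a, b - p) above it.  Raising the coefficient of w by c therefore replaces
   F by F + T on Omega, where T is the tent of height c over [a, b] with slopes 1, 0, -1.
   The slope jumps of T are -1 at a and b and +1 at a + c and b - c, and they add to the
   multiplicities of F. *)

Section Slopes.
Variable R : realType.
Implicit Types (f g : R -> R) (x z d s u : R).

Lemma exists_pos_le2 d1 d2 : 0 < d1 -> 0 < d2 ->
  exists2 m, 0 < m & m <= d1 /\ m <= d2.
Proof.
move=> d10 d20; exists (Num.min d1 d2); first by rewrite lt_min d10 d20.
by rewrite !ge_min !lexx ?orbT.
Qed.

Lemma nbhs_distP (P : set R) x :
  (exists2 d, 0 < d & forall z, `|z - x| < d -> P z) <-> nbhs x P.
Proof.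
split.
- move=> [d d0 H]; apply/nbhs_ballP; exists d => // z; rewrite /ball /= => hz.
  by apply: H; rewrite distrC.
- move/nbhs_ballP => [d d0 H]; exists d => // z hz; apply: H.
  by rewrite /ball /= distrC.
Qed.

Lemma open_interval_connected (u v : R) : connected [set x | u < x < v].
Proof.
apply/connected_intervalP => x y /= /andP[ux xv] /andP[uy yv] z /andP[xz zy].
by apply/andP; split; lra.
Qed.

Lemma derivable_linear_approx f x : derivable f x 1 ->
  exists s, forall e, 0 < e -> exists2 d, 0 < d &
    forall t, t != 0 -> `|t| < d -> `|f (x + t) - f x - s * t| < e * `|t|.
Proof.
move=> df; set s := lim (h^-1 *: ((f \o shift x) (h *: 1) - f x) @[h --> 0^']).
exists s => e e0; have := (@cvgrPdist_lt _ _ _ (0^') _ _ _).1 df e e0.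
rewrite near_withinE => /(_ ltac:(typeclasses eauto)) /nbhs_ballP [d d0 Hd].
exists d => // t t0 td.
have := Hd t; rewrite /ball /= sub0r normrN => /(_ td t0) Hq.
have -> : f (x + t) - f x - s * t = ((f (x + t) - f x) / t - s) * t.
  by rewrite mulrBl divfK.
rewrite normrM ltr_pM2r ?normr_gt0 //; move: Hq; rewrite distrC; congr (`|_ - _| < _).
by rewrite mulrC -[t^-1 *: _]/(t^-1 * _) -[t%:A]/(t * 1) mulr1 (addrC t x).
Qed.

Definition has_slopes f x s1 s2 := exists2 d, 0 < d &
  (forall z, x - d < z <= x -> f z = f x + s1 * (z - x)) /\
  (forall z, x <= z < x + d -> f z = f x + s2 * (z - x)).

Lemma lderiv_slopes f x s1 s2 : has_slopes f x s1 s2 -> lderiv f x = s1.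
Proof.
move=> [d d0 [H1 _]]; apply: cvg_lim; first exact: Rhausdorff.
apply: cvg_near_cst; rewrite near_withinE; apply/nbhs_ballP; exists d => // z.
rewrite /ball /= => hz zx.
rewrite H1; last by rewrite (ltW zx) andbT; move: hz; rewrite ltr_distlC; lra.
by rewrite addrC addKr mulfK // subr_eq0 lt_eqF.
Qed.

Lemma rderiv_slopes f x s1 s2 : has_slopes f x s1 s2 -> rderiv f x = s2.
Proof.
move=> [d d0 [_ H2]]; apply: cvg_lim; first exact: Rhausdorff.
apply: cvg_near_cst; rewrite near_withinE; apply/nbhs_ballP; exists d => // z.
rewrite /ball /= => hz zx.
rewrite H2; last by rewrite (ltW zx) /=; move: hz; rewrite ltr_distlC; lra.
by rewrite addrC addKr mulfK // subr_eq0 gt_eqF.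
Qed.

Lemma derivable_slopes f x s : has_slopes f x s s -> derivable f x 1.
Proof.
move=> [d d0 [H1 H2]]; apply: (is_cvg_near_cst s).
rewrite near_withinE; apply/nbhs_ballP; exists d => // h.
rewrite /ball /= sub0r normrN => hd h0.
rewrite /= -[h%:A]/(h * 1) mulr1.
have [hn|hp] := ltP h 0.
- rewrite H1; last by move: hd; rewrite ltr_norml; lra.
  by rewrite addrC addKr -[_ *: _]/(_ * _) addrK mulrC mulfK.
- rewrite H2; last by move: hd; rewrite ltr_norml; lra.
  by rewrite addrC addKr -[_ *: _]/(_ * _) addrK mulrC mulfK.
Qed.

Lemma has_slopes_line f x u s d : 0 < d ->
  (forall z, `|z - x| < d -> f z = u + z * s) -> has_slopes f x s s.
Proof.
move=> d0 H; have fx : f x = u + x * s by apply: H; rewrite subrr normr0.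
exists d => //; split => z /andP[z1 z2]; rewrite H ?fx; try ring;
  rewrite ltr_norml; apply/andP; split; lra.
Qed.

Lemma has_slopesD f g x s1 s2 t1 t2 : has_slopes f x s1 s2 -> has_slopes g x t1 t2 ->
  has_slopes (f \+ g) x (s1 + t1) (s2 + t2).
Proof.
move=> [d d0 [H1 H2]] [e e0 [G1 G2]]; have [m m0 [md me]] := exists_pos_le2 d0 e0.
exists m => //; split => z hz /=.
- rewrite (H1 z) ?(G1 z); [by ring| |]; move: hz => /andP[]; lra.
- rewrite (H2 z) ?(G2 z); [by ring| |]; move: hz => /andP[]; lra.
Qed.

Lemma has_slopesN f x s1 s2 : has_slopes f x s1 s2 -> has_slopes (\- f) x (- s1) (- s2).
Proof.
move=> [d d0 [H1 H2]]; exists d => //; split => z hz /=.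
- by rewrite H1 //; ring.
- by rewrite H2 //; ring.
Qed.

Lemma has_slopes_near f g x s1 s2 d : 0 < d ->
  (forall z, `|z - x| < d -> g z = f z) -> has_slopes f x s1 s2 -> has_slopes g x s1 s2.
Proof.
move=> d0 He [e e0 [H1 H2]]; have [m m0 [md me]] := exists_pos_le2 d0 e0.
have gx : g x = f x by apply: He; rewrite subrr normr0.
exists m => //; split => z /andP[z1 z2].
- rewrite (He z) ?(H1 z) ?gx //; first by apply/andP; split; lra.
  by rewrite ltr_norml; apply/andP; split; lra.
- rewrite (He z) ?(H2 z) ?gx //; first by apply/andP; split; lra.
  by rewrite ltr_norml; apply/andP; split; lra.
Qed.

End Slopes.

Section InfLines.
Variables (R : realType) (al be : R).
Implicit Types (f : R -> R) (A : int -> R) (x z d : R) (k j v : int).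

Definition inf_lines f A :=
  forall z, Omega al be z -> is_glb [set A v + z * v%:~R | v in [set: int]] (f z).

Lemma inf_lines_le f A z v : inf_lines f A -> Omega al be z -> f z <= A v + z * v%:~R.
Proof. by move=> H /H [+ _]; apply; exists v. Qed.

Lemma inf_lines_ge f A z m : inf_lines f A -> Omega al be z ->
  (forall v, m <= A v + z * v%:~R) -> m <= f z.
Proof. by move=> H /H [_ +] Hm; apply => y [v _ <-]. Qed.

Lemma intr_sep k j : k != j -> (j%:~R + 1 <= k%:~R :> R) \/ (k%:~R + 1 <= j%:~R :> R).
Proof.
move=> /eqP kj; have [h|h] : (j + 1 <= k)%R \/ (k + 1 <= j)%R by lia.
- by left; rewrite -intrD1 ler_int.
- by right; rewrite -intrD1 ler_int.
Qed.

Lemma line_coef_inj A k j x1 x2 : x1 != x2 ->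
  A k + x1 * k%:~R = A j + x1 * j%:~R -> A k + x2 * k%:~R = A j + x2 * j%:~R -> k = j.
Proof.
move=> x12 h1 h2; have : (x1 - x2) * (k%:~R : R) = (x1 - x2) * j%:~R by lra.
by move/(mulfI _)/intr_inj; apply; rewrite subr_eq0.
Qed.

(* Pick a line [k] that is almost active at [x]; the other lines have slopes at distance
   at least [1] from [k], so near [x] they cannot go below it without spoiling the
   differentiability of [f] at [x]. *)
Lemma inf_lines_locally_line f A x : inf_lines f A -> al < x < be -> derivable f x 1 ->
  exists k, exists2 d, 0 < d & forall z, `|z - x| < d -> f z = A k + z * k%:~R.
Proof.
move=> Hf /andP[ax xb] /derivable_linear_approx [s Hs].
have [d1 d10 Hd1] := Hs (1/4) ltac:(lra).
have [m1 m10 [m1a m1b]] := @exists_pos_le2 R (x - al) (be - x) ltac:(lra) ltac:(lra).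
have [m m0 [md1 mm1]] := exists_pos_le2 d10 m10.
set t := m / 2; have t0 : 0 < t by rewrite /t; lra.
have Ot1 : Omega al be (x + t) by apply/andP; split; rewrite /t; lra.
have Ot2 : Omega al be (x - t) by apply/andP; split; rewrite /t; lra.
have := Hd1 t (lt0r_neq0 t0) ltac:(rewrite gtr0_norm // /t; lra).
have := Hd1 (- t) ltac:(by rewrite oppr_eq0 lt0r_neq0)
  ltac:(rewrite normrN gtr0_norm // /t; lra).
rewrite normrN (gtr0_norm t0) !ltr_norml => /andP[M3 M4] /andP[P3 P4].
have [k Hk] : exists k, A k + x * k%:~R < f x + t / 8.
  apply: contrapT => Hn; suff : f x + t / 8 <= f x by lra.
  apply: (inf_lines_ge Hf); first by apply/andP; split; lra.
  by move=> v; rewrite leNgt; apply/negP => hv; apply: Hn; exists v.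
have C1 := inf_lines_le k Hf Ot1; have C2 := inf_lines_le k Hf Ot2.
exists k, (t / 4); first lra.
move=> z; rewrite ltr_norml => /andP[z1 z2].
have Oz : Omega al be z by apply/andP; split; rewrite /t in z1 z2; lra.
apply/eqP; rewrite eq_le (inf_lines_le _ Hf Oz) /=.
apply: (inf_lines_ge Hf Oz) => v; have [->|vk] := eqVneq v k; first by [].
have A1 := inf_lines_le v Hf Ot1; have A2 := inf_lines_le v Hf Ot2.
set K := (v%:~R : R) in A1 A2 *; set K0 := (k%:~R : R) in C1 C2 Hk *.
have [D|D] := intr_sep vk; rewrite -/K -/K0 in D.
- have H1 : 0 <= (z - x + t / 4) * (K - K0) by apply: mulr_ge0; lra.
  have H2 : 0 <= t * (K - K0 - 1) by apply: mulr_ge0; lra.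
  nra.
- have H1 : 0 <= (t / 4 - (z - x)) * (K0 - K) by apply: mulr_ge0; lra.
  have H2 : 0 <= t * (K0 - K - 1) by apply: mulr_ge0; lra.
  nra.
Qed.

Lemma inf_lines_slopes_eq f A x s1 s2 : inf_lines f A -> al < x < be ->
  has_slopes f x s1 s2 -> derivable f x 1 -> s1 = s2.
Proof.
move=> Hf Hx [d d0 [H1 H2]] /(inf_lines_locally_line Hf Hx) [k [e e0 He]].
have [m m0 [md me]] := exists_pos_le2 d0 e0.
set t := m / 2; have t0 : 0 < t by rewrite /t; lra.
have ex : f x = A k + x * k%:~R by apply: He; rewrite subrr normr0.
have e1 : f (x - t) = A k + (x - t) * k%:~R.
  by apply: He; rewrite addrC addKr normrN gtr0_norm // /t; lra.
have e2 : f (x + t) = A k + (x + t) * k%:~R.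
  by apply: He; rewrite (addrC x) addrK gtr0_norm // /t; lra.
have f1 := H1 (x - t) ltac:(apply/andP; split; rewrite /t; lra).
have f2 := H2 (x + t) ltac:(apply/andP; split; rewrite /t; lra).
have h1 : s1 * t = k%:~R * t by nra.
have h2 : s2 * t = k%:~R * t by nra.
by move: h1 h2 => /(mulIf (lt0r_neq0 t0)) -> /(mulIf (lt0r_neq0 t0)).
Qed.

Lemma nonsmooth_slopes f A x s1 s2 : inf_lines f A -> al < x < be ->
  has_slopes f x s1 s2 -> nonsmooth al be f x <-> s1 != s2.
Proof.
move=> Hf Hx Hs; split.
- move=> [_ nd]; apply/eqP => e; apply: nd; apply: (@derivable_slopes _ _ _ s1).
  by rewrite {2}e.
- by move=> /eqP ne; split => // /(inf_lines_slopes_eq Hf Hx Hs).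
Qed.

Lemma MF_slopes f A x s1 s2 : inf_lines f A -> al < x < be ->
  has_slopes f x s1 s2 -> MF al be f x = (s1 - s2)%:E.
Proof.
move=> Hf Hx Hs; have /andP[ax xb] := Hx.
rewrite /MF (gt_eqF ax) (lt_eqF xb) /=.
have [e|ne] := eqVneq s1 s2.
- by rewrite e subrr asboolF // (nonsmooth_slopes Hf Hx Hs) e eqxx.
- rewrite asboolT; last by rewrite (nonsmooth_slopes Hf Hx Hs).
  by rewrite /mult (lderiv_slopes Hs) (rderiv_slopes Hs).
Qed.

End InfLines.

Section OneSidedLines.
Variables (R : realType) (al be : R).
Implicit Types (f : R -> R) (A : int -> R) (x y z d u v : R) (k w : int).

(* The points where the line of the midpoint is locally active form a nonempty
   relatively clopen subset of the connected interval. *)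
Lemma locally_line_interval f A u v : u < v ->
  (forall x, u < x < v -> exists k, exists2 d, 0 < d &
     forall z, `|z - x| < d -> f z = A k + z * k%:~R) ->
  exists k, forall x, u < x < v -> f x = A k + x * k%:~R.
Proof.
move=> uv H; set I := [set x | u < x < v].
have [k [d d0 Hd]] := H ((u + v) / 2) ltac:(apply/andP; split; lra).
set L := fun j => [set z | f z = A j + z * j%:~R].
set C := interior (L k).
set D := \bigcup_(j in [set j | j != k]) interior (L j).
have oC : open C by apply: open_interior.
have oD : open D by apply: bigcup_open => j _; apply: open_interior.
have IC : I `&` C = I `&` ~` D.
  apply/seteqP; split => x [Ix Hx]; split => //.
  - move=> [j /= /eqP jk] /nbhs_distP [e e0 He].
    move: Hx => /nbhs_distP [e' e0' He'].
    have [m m0 [me me']] := exists_pos_le2 e0 e0'.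
    apply: jk; apply: (@line_coef_inj _ A j k x (x + m / 2)).
    + by apply/negP => /eqP; lra.
    + by rewrite -He ?He' ?subrr ?normr0.
    + by rewrite -He ?He' // (addrC x) addrK gtr0_norm; lra.
  - have [j [e e0 He]] := H x Ix.
    have [jk|jk] := eqVneq j k.
    + by apply/nbhs_distP; exists e => // z hz; rewrite /L /= He // jk.
    + by exfalso; apply: Hx; exists j => //; apply/nbhs_distP; exists e.
have ICI : I `&` C = I.
  apply: (@open_interval_connected _ u v (I `&` C)) => //.
  - exists ((u + v) / 2); split; first by rewrite /I /=; apply/andP; split; lra.
    by apply/nbhs_distP; exists d.
  - by exists C.
  - by exists (~` D); [apply: open_closedC|].
exists k => x Ix; have : (I `&` C) x by rewrite ICI.
by move=> [_ /nbhs_distP [e e0 He]]; apply: He; rewrite subrr normr0.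
Qed.

Lemma affine_ge0_at_right_end (c s u x : R) : u < x ->
  (forall t, u < t < x -> 0 <= c + s * t) -> 0 <= c + s * x.
Proof.
move=> ux H; rewrite leNgt; apply/negP => V0.
have [s0|s0] := leP 0 s.
- have := H ((u + x) / 2) ltac:(apply/andP; split; lra).
  have : 0 <= s * (x - (u + x) / 2) by apply: mulr_ge0 => //; lra.
  nra.
- set V := c + s * x in V0.
  have e0 : 0 < (- V) / (2 * - s) by apply: divr_gt0; lra.
  have [m m0 [m1 m2]] := @exists_pos_le2 R _ ((x - u) / 2) e0 ltac:(lra).
  have := H (x - m) ltac:(apply/andP; split; lra).
  have es : (- s) * ((- V) / (2 * - s)) = - V / 2 by field; lra.
  have : (- s) * m <= (- s) * ((- V) / (2 * - s)) by apply: ler_wpM2l; lra.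
  rewrite es /V; nra.
Qed.

Lemma affine_ge0_at_left_end (c s u x : R) : x < u ->
  (forall t, x < t < u -> 0 <= c + s * t) -> 0 <= c + s * x.
Proof.
move=> xu H; have := @affine_ge0_at_right_end c (- s) (- u) (- x) ltac:(lra).
rewrite mulrNN; apply => t /andP[t1 t2].
by have := H (- t) ltac:(apply/andP; split; lra); rewrite mulrN mulNr.
Qed.

(* In the next two lemmas, the difference of any line with the active one is nonnegative
   on the open interval, hence at its end. *)
Lemma inf_lines_line_right_end f A k u x : inf_lines al be f A ->
  al <= u -> u < x -> x <= be ->
  (forall z, u < z < x -> f z = A k + z * k%:~R) -> f x = A k + x * k%:~R.
Proof.
move=> Hf au ux xb H; have Ox : Omega al be x by apply/andP; split; lra.
apply/eqP; rewrite eq_le (inf_lines_le _ Hf Ox) /=.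
apply: (inf_lines_ge Hf Ox) => j.
suff : 0 <= A j - A k + (j%:~R - k%:~R) * x by lra.
apply: (affine_ge0_at_right_end ux) => t /andP[t1 t2].
have Ot : Omega al be t by apply/andP; split; lra.
by have := inf_lines_le j Hf Ot; rewrite H ?t1 ?t2 //; lra.
Qed.

Lemma inf_lines_line_left_end f A k u x : inf_lines al be f A ->
  al <= x -> x < u -> u <= be ->
  (forall z, x < z < u -> f z = A k + z * k%:~R) -> f x = A k + x * k%:~R.
Proof.
move=> Hf ax xu ub H; have Ox : Omega al be x by apply/andP; split; lra.
apply/eqP; rewrite eq_le (inf_lines_le _ Hf Ox) /=.
apply: (inf_lines_ge Hf Ox) => j.
suff : 0 <= A j - A k + (j%:~R - k%:~R) * x by lra.
apply: (affine_ge0_at_left_end xu) => t /andP[t1 t2].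
have Ot : Omega al be t by apply/andP; split; lra.
by have := inf_lines_le j Hf Ot; rewrite H ?t1 ?t2 //; lra.
Qed.

Lemma isolated_seq (s : seq R) x :
  exists2 d, 0 < d & forall y, y \in s -> y != x -> d <= `|y - x|.
Proof.
elim: s => [|y0 s [d d0 Hd]]; first by exists 1 => // y; rewrite in_nil.
have [->|y0x] := eqVneq y0 x.
- exists d => // y; rewrite in_cons => /orP[/eqP->|ys]; first by rewrite eqxx.
  exact: Hd.
- have y0p : 0 < `|y0 - x| by rewrite normr_gt0 subr_eq0.
  have [m m0 [m1 m2]] := exists_pos_le2 d0 y0p.
  exists m => // y; rewrite in_cons => /orP[/eqP->|ys] yx //.
  exact: le_trans m1 (Hd _ ys yx).
Qed.

Lemma isolated_finite_set (S : set R) x : finite_set S ->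
  exists2 d, 0 < d & forall y, S y -> y != x -> d <= `|y - x|.
Proof.
move=> /finite_fsetP [X ->]; have [d d0 Hd] := isolated_seq (finmap.enum_fset X) x.
by exists d => // y /= yX; apply: Hd.
Qed.

Lemma punctured_nbhs_smooth f x : finite_set (nonsmooth al be f) -> al < x < be ->
  exists2 m, 0 < m & [/\ m <= x - al, m <= be - x &
    forall y, x - m < y < x + m -> y != x -> derivable f y 1].
Proof.
move=> Hfin /andP[ax xb]; have [d d0 Hd] := isolated_finite_set x Hfin.
have [m1 m10 [m1a m1b]] := @exists_pos_le2 R (x - al) (be - x) ltac:(lra) ltac:(lra).
have [m m0 [md mm1]] := exists_pos_le2 d0 m10.
exists m => //; split; [lra|lra|] => y /andP[y1 y2] yx; apply: contrapT => nd.
have := Hd y ltac:(split => //; apply/andP; split; lra) yx.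
have : `|y - x| < m by rewrite ltr_norml; apply/andP; split; lra.
lra.
Qed.

Lemma one_sided_lines f A x : inf_lines al be f A ->
  finite_set (nonsmooth al be f) -> al < x < be ->
  exists w1 w2, exists2 d, 0 < d &
    (forall z, x - d < z <= x -> f z = A w1 + z * w1%:~R) /\
    (forall z, x <= z < x + d -> f z = A w2 + z * w2%:~R).
Proof.
move=> Hf Hfin Hx; have [m m0 [ma mb Hm]] := punctured_nbhs_smooth Hfin Hx.
have loc y : x - m < y < x + m -> y != x -> exists k, exists2 d, 0 < d &
    forall z, `|z - y| < d -> f z = A k + z * k%:~R.
  move=> /andP[y1 y2] yx; apply: (inf_lines_locally_line Hf).
    by apply/andP; split; lra.
  by apply: Hm => //; apply/andP; split.
have [w1 Hw1] : exists k, forall y, x - m < y < x -> f y = A k + y * k%:~R.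
  apply: locally_line_interval; first lra.
  by move=> y /andP[y1 y2]; apply: loc; [apply/andP; split; lra | rewrite lt_eqF].
have [w2 Hw2] : exists k, forall y, x < y < x + m -> f y = A k + y * k%:~R.
  apply: locally_line_interval; first lra.
  by move=> y /andP[y1 y2]; apply: loc; [apply/andP; split; lra | rewrite gt_eqF].
exists w1, w2, m => //; split => z /andP[z1 z2].
- have [zx|zx] := ltP z x; first by apply: Hw1; apply/andP; split.
  have -> : z = x by lra.
  by apply: (inf_lines_line_right_end Hf _ _ _ Hw1); lra.
- have [xz|xz] := ltP x z; first by apply: Hw2; apply/andP; split.
  have -> : z = x by lra.
  by apply: (inf_lines_line_left_end Hf _ _ _ Hw2); lra.
Qed.

Lemma has_slopes_lines f A x w1 w2 d : 0 < d ->
  (forall z, x - d < z <= x -> f z = A w1 + z * w1%:~R) ->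
  (forall z, x <= z < x + d -> f z = A w2 + z * w2%:~R) ->
  has_slopes f x w1%:~R w2%:~R.
Proof.
move=> d0 L1 L2; exists d => //.
have t1 : f x = A w1 + x * w1%:~R by apply: L1; apply/andP; split; lra.
have t2 : f x = A w2 + x * w2%:~R by apply: L2; apply/andP; split; lra.
by split => z hz; [rewrite (L1 z hz) t1 | rewrite (L2 z hz) t2]; ring.
Qed.

Lemma integer_slopes f A x : inf_lines al be f A ->
  finite_set (nonsmooth al be f) -> al < x < be ->
  exists w1 w2 : int, has_slopes f x w1%:~R w2%:~R.
Proof.
move=> Hf Hfin Hx; have [w1 [w2 [d d0 [L1 L2]]]] := one_sided_lines Hf Hfin Hx.
by exists w1, w2; apply: has_slopes_lines d0 L1 L2.
Qed.

Lemma inf_lines_smooth_nbhs f A y : inf_lines al be f A -> al < y < be ->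
  derivable f y 1 -> exists2 d, 0 < d & forall z, `|z - y| < d -> derivable f z 1.
Proof.
move=> Hf Hy /(inf_lines_locally_line Hf Hy) [k [d d0 Hd]].
exists d => // z zy; apply: (@derivable_slopes _ _ _ k%:~R).
apply: (@has_slopes_line _ _ _ (A k) _ (d - `|z - y|)); first lra.
by move=> t tz; apply: Hd; have := ler_distD z t y; lra.
Qed.

Lemma one_sided_lines_le f A x w1 w2 d : inf_lines al be f A -> al < x < be -> 0 < d ->
  (forall z, x - d < z <= x -> f z = A w1 + z * w1%:~R) ->
  (forall z, x <= z < x + d -> f z = A w2 + z * w2%:~R) -> w2 <= w1.
Proof.
move=> Hf /andP[ax xb] d0 L1 L2.
have [m m0 [md mb]] := @exists_pos_le2 R d (be - x) d0 ltac:(lra).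
have Fx1 : f x = A w1 + x * w1%:~R by apply: L1; apply/andP; split; lra.
have Fx2 : f x = A w2 + x * w2%:~R by apply: L2; apply/andP; split; lra.
have Om : Omega al be (x + m / 2) by apply/andP; split; lra.
have := inf_lines_le w1 Hf Om; rewrite L2; last by apply/andP; split; lra.
move=> h; rewrite -(ler_int R); have : m / 2 * w2%:~R <= m / 2 * w1%:~R :> R by lra.
by rewrite ler_pM2l //; lra.
Qed.

Lemma kink_left_bound f A x W : inf_lines al be f A ->
  finite_set (nonsmooth al be f) -> al < x < be -> ~ derivable f x 1 ->
  (exists2 d, 0 < d & forall z, x <= z < x + d -> f z = A W + z * W%:~R) ->
  forall z, Omega al be z -> z <= x -> f z <= f x + (W%:~R + 1) * (z - x).
Proof.
move=> Hf Hfin Hx nd [e e0 HW] z Oz zx.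
have [w1 [w2 [d d0 [L1 L2]]]] := one_sided_lines Hf Hfin Hx.
have [m m0 [md me]] := exists_pos_le2 d0 e0.
have w2W : w2 = W.
  apply: (@line_coef_inj _ A _ _ x (x + m / 2)); first by apply/negP => /eqP; lra.
  - by rewrite -L2 -?HW //; apply/andP; split; lra.
  - by rewrite -L2 -?HW //; apply/andP; split; lra.
have w1W : w1 != W.
  apply/negP => /eqP eW; apply: nd; apply: (@derivable_slopes _ _ _ w1%:~R).
  by move: (has_slopes_lines d0 L1 L2); rewrite w2W eW.
have : W + 1 <= w1 by move: (one_sided_lines_le Hf Hx d0 L1 L2) w1W; rewrite w2W; lia.
rewrite -(ler_int R) intrD1 => Ww1.
have Fx : f x = A w1 + x * w1%:~R by apply: L1; apply/andP; split; lra.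
have := inf_lines_le w1 Hf Oz.
have : 0 <= (w1%:~R - (W%:~R + 1)) * (x - z) by apply: mulr_ge0; lra.
lra.
Qed.

Lemma kink_right_bound f A x W : inf_lines al be f A ->
  finite_set (nonsmooth al be f) -> al < x < be -> ~ derivable f x 1 ->
  (exists2 d, 0 < d & forall z, x - d < z <= x -> f z = A W + z * W%:~R) ->
  forall z, Omega al be z -> x <= z -> f z <= f x + (W%:~R - 1) * (z - x).
Proof.
move=> Hf Hfin Hx nd [e e0 HW] z Oz xz.
have [w1 [w2 [d d0 [L1 L2]]]] := one_sided_lines Hf Hfin Hx.
have [m m0 [md me]] := exists_pos_le2 d0 e0.
have w1W : w1 = W.
  apply: (@line_coef_inj _ A _ _ x (x - m / 2)); first by apply/negP => /eqP; lra.
  - by rewrite -L1 -?HW //; apply/andP; split; lra.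
  - by rewrite -L1 -?HW //; apply/andP; split; lra.
have w2W : w2 != W.
  apply/negP => /eqP eW; apply: nd; apply: (@derivable_slopes _ _ _ w1%:~R).
  by move: (has_slopes_lines d0 L1 L2); rewrite w1W eW.
have : w2 + 1 <= W by move: (one_sided_lines_le Hf Hx d0 L1 L2) w2W; rewrite w1W; lia.
rewrite -(ler_int R) intrD1 => w2W1.
have Fx : f x = A w2 + x * w2%:~R by apply: L2; apply/andP; split; lra.
have := inf_lines_le w2 Hf Oz.
have : 0 <= (W%:~R - 1 - w2%:~R) * (z - x) by apply: mulr_ge0; lra.
lra.
Qed.

End OneSidedLines.

Lemma is_glb_inf (R : realType) (S : set R) x : is_glb S x -> inf S = x.
Proof.
move=> [Hl Hg]; have S0 : S !=set0.
  apply: contrapT => S0; suff : x + 1 <= x by lra.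
  by apply: Hg => y Sy; exfalso; apply: S0; exists y.
apply/eqP; rewrite eq_le; apply/andP; split; last exact: lb_le_inf.
by apply: Hg => y Sy; apply: ge_inf => //; exists x => z; exact: Hl.
Qed.

Section Canonical.
Variables (R : realType) (al be : R).
Hypothesis alb : al <= be.
Implicit Types (f : R -> R) (A : int -> R).

Lemma canon_le f v (M : R) :
  (forall z, Omega al be z -> f z - z * v%:~R <= M) -> Defs.canon al be f v <= M.
Proof.
move=> H; apply: ge_sup; last by move=> y [z Oz <-]; apply: H.
by exists (f al - al * v%:~R); exists al => //; apply/andP; split => //; exact: alb.
Qed.

Lemma canon_inf_lines f A : inf_lines al be f A -> inf_lines al be f (Defs.canon al be f).
Proof.
move=> Hf z Oz; have canon_leA v : Defs.canon al be f v <= A v.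
  by apply: canon_le => y Oy; have := inf_lines_le v Hf Oy; lra.
split.
- move=> _ [v _ <-]; suff : f z - z * v%:~R <= Defs.canon al be f v by lra.
  apply: ub_le_sup; last by exists z.
  by exists (A v) => _ [y Oy <-]; have := inf_lines_le v Hf Oy; lra.
- move=> m Hm; apply: (inf_lines_ge Hf Oz) => v.
  by have := Hm _ (ex_intro2 _ _ v I erefl); have := canon_leA v; lra.
Qed.

End Canonical.

Section Tent.
Variable R : realType.
Implicit Types (a b c x y z : R).

Definition ramp y z := Num.max 0 (z - y).

Lemma ramp_le y z : z <= y -> ramp y z = 0.
Proof. by move=> h; apply/max_idPl; lra. Qed.

Lemma ramp_ge y z : y <= z -> ramp y z = z - y.
Proof. by move=> h; apply/max_idPr; lra. Qed.

Lemma has_slopes_ramp y x : has_slopes (ramp y) x (y < x)%R%:R (y <= x)%R%:R.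
Proof.
have [xy|yx|<-] := ltgtP x y.
- exists (y - x); first lra.
  rewrite (ramp_le (ltW xy)) /= ?mulr0n ?mulr1n.
  by split => z /andP[z1 z2]; rewrite ramp_le; lra.
- exists (x - y); first lra.
  rewrite (ramp_ge (ltW yx)) /= ?mulr0n ?mulr1n.
  by split => z /andP[z1 z2]; rewrite ramp_ge; lra.
- exists 1; first lra.
  rewrite ramp_le //= ?mulr0n ?mulr1n.
  by split => z /andP[z1 z2]; [rewrite ramp_le | rewrite ramp_ge]; lra.
Qed.

(* [G_p F - F] on [Omega], with the notation of [mainTheorem3]. *)
Definition tent a b c z := ramp a z - ramp (a + c) z - ramp (b - c) z + ramp b z.

Definition tent_kink a b c x : R :=
  (a + c == x)%:R + (b - c == x)%:R - (a == x)%:R - (b == x)%:R.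

Lemma tent_out a b c z : 0 <= c -> a + c <= b - c ->
  z <= a \/ b <= z -> tent a b c z = 0.
Proof.
move=> c0 acb [hz|hz]; rewrite /tent.
- by rewrite !ramp_le //; lra.
- by rewrite !ramp_ge //; lra.
Qed.

Lemma tent_in a b c z : 0 <= c -> a + c <= b - c -> a <= z <= b ->
  tent a b c z = Num.min c (Num.min (z - a) (b - z)).
Proof.
move=> c0 acb /andP[az zb]; rewrite /tent (ramp_ge az) (ramp_le zb).
have [zac|acz] := leP z (a + c).
  rewrite !ramp_le //; last lra.
  by rewrite (min_idPr _) ?(min_idPl _) //; rewrite ?le_min; lra.
rewrite (ramp_ge (ltW acz)); have [zbc|bcz] := leP z (b - c).
  by rewrite ramp_le // (min_idPl _) ?le_min; lra.
by rewrite (ramp_ge (ltW bcz)) (min_idPr _) ?(min_idPr _) ?le_min; lra.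
Qed.

Lemma tent_ge0 a b c z : 0 <= c -> a + c <= b - c -> 0 <= tent a b c z.
Proof.
move=> c0 acb; have [/andP[az zb]|] := boolP ((a <= z) && (z <= b)).
  by rewrite tent_in ?az ?zb // !le_min; lra.
by rewrite negb_and -!ltNge => /orP[h|h]; rewrite tent_out //; lra.
Qed.

Lemma has_slopes_tent a b c x :
  exists s, has_slopes (tent a b c) x (s + tent_kink a b c x) s.
Proof.
have jump y : (y < x)%R%:R = (y <= x)%R%:R - (y == x)%:R :> R.
  by rewrite le_eqVlt; case: ltgtP => //= _; rewrite ?mulr0n ?mulr1n; ring.
have := has_slopesD (has_slopesD (has_slopesD (has_slopes_ramp a x)
  (has_slopesN (has_slopes_ramp (a + c) x))) (has_slopesN (has_slopes_ramp (b - c) x)))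
  (has_slopes_ramp b x).
rewrite !jump; set sr := (X in has_slopes _ _ _ X) => H.
by exists sr; move: H; congr has_slopes; rewrite /sr /tent_kink; ring.
Qed.

End Tent.

Section TentPerturbation.
Variables (R : realType) (al be a b c : R) (F G : R -> R) (A B : int -> R).
Hypotheses (HF : inf_lines al be F A) (HFfin : finite_set (nonsmooth al be F)).
Hypotheses (HG : inf_lines al be G B)
  (HGF : forall z, Omega al be z -> G z = F z + tent a b c z).

Lemma tent_perturb_slopes x : al < x < be -> exists s1 s2 t,
  has_slopes F x s1 s2 /\ has_slopes G x (s1 + t + tent_kink a b c x) (s2 + t).
Proof.
move=> Hx; have /andP[ax xb] := Hx.
have [w1 [w2 Fs]] := integer_slopes HF HFfin Hx.
have [t Ts] := has_slopes_tent a b c x.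
exists w1%:~R, w2%:~R, t; split => //; rewrite -addrA.
have [m m0 [ma mb]] := @exists_pos_le2 R (x - al) (be - x) ltac:(lra) ltac:(lra).
apply: (has_slopes_near m0 _ (has_slopesD Fs Ts)) => z.
by rewrite ltr_norml => /andP[z1 z2]; apply: HGF; apply/andP; split; lra.
Qed.

Lemma nonsmooth_tent_perturb :
  nonsmooth al be G `<=`
    nonsmooth al be F `|` ([set a] `|` [set a + c] `|` [set b - c] `|` [set b]).
Proof.
move=> x Gx; have Hx := Gx.1; have [s1 [s2 [t [Fs Gs]]]] := tent_perturb_slopes Hx.
apply: contrapT => /not_orP [Fx]; rewrite /tent_kink /= => xabc.
have s12 : s1 = s2 by apply: contrapT => /eqP ne; apply/Fx/(nonsmooth_slopes HF Hx Fs).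
have kink0 : tent_kink a b c x = 0.
  have nx y : y \in [:: a; a + c; b - c; b] -> (y == x) = false.
    move=> yin; apply/negP => /eqP yx; apply: xabc; move: yin; rewrite yx !inE.
    by case/or4P => /eqP <-; [left; left; left | left; left; right | left; right | right].
  by rewrite /tent_kink !nx ?inE ?eqxx ?orbT //= !mulr0n; ring.
by move: Gx; rewrite (nonsmooth_slopes HG Hx Gs) kink0 addr0 s12 eqxx.
Qed.

Lemma finite_nonsmooth_tent_perturb : finite_set (nonsmooth al be G).
Proof.
apply: (sub_finite_set nonsmooth_tent_perturb).
by rewrite !finite_setU; do !split => //; exact: finite_set1.
Qed.

Lemma MF_tent_perturb x : Omega al be x ->
  MF al be G x = (MF al be F x - kdelta a x - kdelta b x
                   + kdelta (a + c) x + kdelta (b - c) x)%E.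
Proof.
move=> Ox; have [->|xal] := eqVneq x al.
  by rewrite /MF eqxx /kdelta -!EFinN !addye.
have [->|xbe] := eqVneq x be.
  by rewrite /MF eqxx orbT /kdelta -!EFinN !addye.
have Hx : al < x < be.
  by move: Ox => /andP[h1 h2]; rewrite !lt_neqAle h1 h2 eq_sym xal xbe.
have [s1 [s2 [t [Fs Gs]]]] := tent_perturb_slopes Hx.
rewrite (MF_slopes HG Hx Gs) (MF_slopes HF Hx Fs) /kdelta -!EFinB -!EFinD.
by congr (_%:E); rewrite /tent_kink; ring.
Qed.

End TentPerturbation.

Section Component.
Variables (R : realType) (al be p a b : R) (F : R -> R).
Hypotheses (HF : trop_poly al be F) (Hp : al < p < be) (Hps : ~ nonsmooth al be F p).
Hypothesis Hcomp : connected_component ([set x | al < x < be] `\` nonsmooth al be F) p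
  = [set x | a < x < b].

Let A := Defs.canon al be F.

Lemma F_inf_lines : inf_lines al be F A.
Proof.
have [[_ [_ [_ [A0 HA0]]]] _] := HF; have /andP[alp pbe] := Hp.
by apply: canon_inf_lines HA0; lra.
Qed.

Lemma p_derivable : derivable F p 1.
Proof. by apply: contrapT => nd; apply: Hps; split. Qed.

Lemma component_smooth x : a < x < b -> al < x < be /\ derivable F x 1.
Proof.
move=> ax; have : connected_component
    ([set x | al < x < be] `\` nonsmooth al be F) p x by rewrite Hcomp.
move/connected_component_sub => [Hx nsx]; split => //.
by apply: contrapT => nd; apply: nsx; split.
Qed.

Lemma component_max u v : u < p < v ->
  (forall x, u < x < v -> al < x < be /\ derivable F x 1) ->
  forall x, u < x < v -> a < x < b.
Proof.
move=> up H x ux.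
have sub : [set x | u < x < v] `<=` [set x | al < x < be] `\` nonsmooth al be F.
  by move=> y /H [Hy dy]; split; [exact: Hy | move=> [_ nd]; exact: nd dy].
have := connected_component_max (up : [set x | u < x < v] p) sub.
by move=> /(_ (@open_interval_connected _ u v) x ux); rewrite Hcomp.
Qed.

Lemma component_order : [/\ al <= a, a < p, p < b & b <= be].
Proof.
have /andP[alp pbe] := Hp.
have : connected_component ([set x | al < x < be] `\` nonsmooth al be F) p p.
  by apply: connected_component_refl; split.
rewrite Hcomp => /andP[ap pb]; split => //.
- rewrite leNgt; apply/negP => aal.
  have [/andP[h1 h2] _] := component_smooth (x := al) ltac:(apply/andP; split; lra).
  by rewrite ltxx in h1.
- rewrite leNgt; apply/negP => bbe.
  have [/andP[h1 h2] _] := component_smooth (x := be) ltac:(apply/andP; split; lra).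
  by rewrite ltxx in h2.
Qed.

(* Otherwise the component could be enlarged beyond its end point. *)
Lemma left_end_nonsmooth : al < a -> ~ derivable F a 1.
Proof.
move=> ala da; have [_ ap pb bbe] := component_order.
have Ha : al < a < be by apply/andP; split; lra.
have [d d0 Hd] := inf_lines_smooth_nbhs F_inf_lines Ha da.
have [e e0 [ed ea]] := @exists_pos_le2 R _ (a - al) d0 ltac:(lra).
suff /andP[] : a < a < b by rewrite ltxx.
apply: (component_max (u := a - e) (v := b)); first by apply/andP; split; lra.
- move=> x /andP[x1 x2]; have [xa|ax] := leP x a; last first.
    by apply: component_smooth; rewrite ax x2.
  split; first by apply/andP; split; lra.
  by apply: Hd; rewrite ltr_norml; apply/andP; split; lra.
- by apply/andP; split; lra.
Qed.

Lemma right_end_nonsmooth : b < be -> ~ derivable F b 1.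
Proof.
move=> bbe db; have [alA ap pb _] := component_order.
have Hb : al < b < be by apply/andP; split; lra.
have [d d0 Hd] := inf_lines_smooth_nbhs F_inf_lines Hb db.
have [e e0 [ed eb]] := @exists_pos_le2 R _ (be - b) d0 ltac:(lra).
suff /andP[] : a < b < b by rewrite ltxx.
apply: (component_max (u := a) (v := b + e)); first by apply/andP; split; lra.
- move=> x /andP[x1 x2]; have [xb|bx] := ltP x b.
    by apply: component_smooth; rewrite x1 xb.
  split; first by apply/andP; split; lra.
  by apply: Hd; rewrite ltr_norml; apply/andP; split; lra.
- by apply/andP; split; lra.
Qed.

Let W := xget 0 [set w : int | \forall z \near p, F z = A w + z * w%:~R].

Lemma line_near_p : \forall z \near p, F z = A W + z * W%:~R.
Proof.
apply: (xgetPex 0 (P := [set w : int | \forall z \near p, F z = A w + z * w%:~R])).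
have [k [d d0 Hd]] := inf_lines_locally_line F_inf_lines Hp p_derivable.
by exists k; apply/nbhs_distP; exists d.
Qed.

Lemma component_line x : a <= x <= b -> F x = A W + x * W%:~R.
Proof.
have [alA ap pb bbe] := component_order.
have [k Hk] : exists k, forall x, a < x < b -> F x = A k + x * k%:~R.
  apply: locally_line_interval; first lra.
  by move=> y /component_smooth [Hy dy]; apply: inf_lines_locally_line F_inf_lines Hy dy.
have kW : k = W.
  have [d d0 Hd] := (nbhs_distP _ _).2 line_near_p.
  have [m m0 [md mb]] := @exists_pos_le2 R _ (b - p) d0 ltac:(lra).
  apply: (@line_coef_inj _ A _ _ p (p + m / 2)); first by apply/negP => /eqP; lra.
  - by rewrite -Hk ?Hd ?subrr ?normr0 //; apply/andP; split; lra.
  - rewrite -Hk ?Hd //; last by apply/andP; split; lra.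
    by rewrite (addrC p) addrK gtr0_norm; lra.
rewrite -kW => /andP[ax xb]; have [xa|xa] := eqVneq x a.
  by rewrite xa; apply: (inf_lines_line_left_end F_inf_lines alA _ bbe Hk); lra.
have [xb'|xb'] := eqVneq x b.
  by rewrite xb'; apply: (inf_lines_line_right_end F_inf_lines alA _ bbe Hk); lra.
by apply: Hk; rewrite !lt_neqAle ax xb eq_sym xa xb'.
Qed.

Lemma canon_succ_le : A (W + 1) <= F a - (W%:~R + 1) * a.
Proof.
have [alA ap pb bbe] := component_order.
apply: canon_le; first lra.
move=> z Oz; rewrite intrD1; suff : F z <= F a + (W%:~R + 1) * (z - a) by lra.
have Fa : F a = A W + a * W%:~R by apply: component_line; apply/andP; split; lra.
have [za|az] := leP z a; last first.
  by have := inf_lines_le W F_inf_lines Oz; lra.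
have [ala|aal] := ltP al a; last first.
  move: Oz => /andP[alz _]; have -> : z = a by lra.
  lra.
apply: (kink_left_bound F_inf_lines HF.2 _ (left_end_nonsmooth ala)) => //.
  by apply/andP; split; lra.
exists (b - a); first lra.
by move=> y /andP[y1 y2]; apply: component_line; apply/andP; split; lra.
Qed.

Lemma canon_pred_le : A (W - 1) <= F b - (W%:~R - 1) * b.
Proof.
have [alA ap pb bbe] := component_order.
apply: canon_le; first lra.
move=> z Oz; rewrite intrB mulr1z; suff : F z <= F b + (W%:~R - 1) * (z - b) by lra.
have Fb : F b = A W + b * W%:~R by apply: component_line; apply/andP; split; lra.
have [bz|zb] := leP b z; last first.
  by have := inf_lines_le W F_inf_lines Oz; lra.
have [bbe'|beb] := ltP b be; last first.
  move: Oz => /andP[_ zbe]; have -> : z = b by lra.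
  lra.
apply: (kink_right_bound F_inf_lines HF.2 _ (right_end_nonsmooth bbe')) => //.
  by apply/andP; split; lra.
exists (b - a); first lra.
by move=> y /andP[y1 y2]; apply: component_line; apply/andP; split; lra.
Qed.

Let c := Num.min (p - a) (b - p).

Lemma c_bounds : [/\ 0 < c, c <= p - a & c <= b - p].
Proof.
have [_ ap pb _] := component_order.
by rewrite /c lt_min !ge_min !lexx orbT; split => //; apply/andP; split; lra.
Qed.

(* The lines of slope [W + 1] and [W - 1] already bound the others, through [a] and [b]. *)
Lemma inf_other_lines :
  inf [set A u + p * u%:~R | u in [set u : int | u != W]] = F p + c.
Proof.
have [alA ap pb bbe] := component_order; have [c0 cpa cbp] := c_bounds.
have Oa : Omega al be a by apply/andP; split; lra.
have Ob : Omega al be b by apply/andP; split; lra.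
have Fa : F a = A W + a * W%:~R by apply: component_line; apply/andP; split; lra.
have Fb : F b = A W + b * W%:~R by apply: component_line; apply/andP; split; lra.
have Fp : F p = A W + p * W%:~R by apply: component_line; apply/andP; split; lra.
apply: is_glb_inf; split.
- move=> _ [u /= uW <-]; have [D|D] := intr_sep R uW.
  + have := inf_lines_le u F_inf_lines Oa.
    have : 0 <= (u%:~R - W%:~R - 1) * (p - a) by apply: mulr_ge0; lra.
    lra.
  + have := inf_lines_le u F_inf_lines Ob.
    have : 0 <= (W%:~R - 1 - u%:~R) * (b - p) by apply: mulr_ge0; lra.
    lra.
- move=> m Hm.
  have W1 : W + 1 != W by rewrite gt_eqF // ltrDl.
  have W2 : W - 1 != W by rewrite lt_eqF // gtrBl.
  have h1 := Hm _ (ex_intro2 _ _ (W + 1) W1 erefl).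
  have h2 := Hm _ (ex_intro2 _ _ (W - 1) W2 erefl).
  rewrite /= intrD1 in h1; rewrite /= intrB mulr1z in h2.
  have := canon_succ_le; have := canon_pred_le; rewrite -/A => C1 C2.
  suff : m - F p <= c by lra.
  by rewrite /c le_min; apply/andP; split; lra.
Qed.

Let B (v : int) := if v == W then
  inf [set A u + p * u%:~R | u in [set u : int | u != W]] - p * W%:~R else A v.

Lemma Gp_eq : Gp al be p F = fun z => inf [set B v + z * v%:~R | v in [set: int]].
Proof. by rewrite /Gp asboolT //; exact: p_derivable. Qed.

Lemma B_W : B W = A W + c.
Proof.
have [_ ap pb _] := component_order.
have Fp : F p = A W + p * W%:~R by apply: component_line; apply/andP; split; lra.
by rewrite /B eqxx inf_other_lines Fp; ring.
Qed.

Lemma B_other v : v != W -> B v = A v.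
Proof. by rewrite /B => /negbTE ->. Qed.

Lemma tent_below_lines z v : Omega al be z -> F z + tent a b c z <= B v + z * v%:~R.
Proof.
move=> Oz; have [alA ap pb bbe] := component_order; have [c0 cpa cbp] := c_bounds.
have acb : a + c <= b - c by lra.
have tent_outside : z <= a \/ b <= z -> tent a b c z = 0 := tent_out (ltW c0) acb.
have tent_inside : a <= z <= b -> tent a b c z = Num.min c (Num.min (z - a) (b - z))
  := tent_in (ltW c0) acb.
have [zab|zab] := boolP ((a <= z) && (z <= b)); last first.
  have := inf_lines_le v F_inf_lines Oz; rewrite tent_outside; last first.
    by move: zab; rewrite negb_and -!ltNge => /orP[] /ltW; [left|right].
  have [->|vW] := eqVneq v W; rewrite ?B_W ?B_other //; lra.
have Fz : F z = A W + z * W%:~R by apply: component_line.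
rewrite tent_inside //; move: zab => /andP[az zb].
have [->|vW] := eqVneq v W.
  rewrite B_W Fz; have : Num.min c (Num.min (z - a) (b - z)) <= c by rewrite ge_min lexx.
  lra.
rewrite B_other // Fz; have [D|D] := intr_sep R vW.
- have Oa : Omega al be a by apply/andP; split; lra.
  have Fa : F a = A W + a * W%:~R by apply: component_line; apply/andP; split; lra.
  have := inf_lines_le v F_inf_lines Oa.
  have : Num.min c (Num.min (z - a) (b - z)) <= z - a by rewrite !ge_min lexx orbT.
  have : 0 <= (v%:~R - W%:~R - 1) * (z - a) by apply: mulr_ge0; lra.
  lra.
- have Ob : Omega al be b by apply/andP; split; lra.
  have Fb : F b = A W + b * W%:~R by apply: component_line; apply/andP; split; lra.
  have := inf_lines_le v F_inf_lines Ob.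
  have : Num.min c (Num.min (z - a) (b - z)) <= b - z by rewrite !ge_min lexx !orbT.
  have : 0 <= (W%:~R - 1 - v%:~R) * (b - z) by apply: mulr_ge0; lra.
  lra.
Qed.

Lemma lines_below_tent z m : Omega al be z ->
  (forall v, m <= B v + z * v%:~R) -> m <= F z + tent a b c z.
Proof.
move=> Oz hm; have [alA ap pb bbe] := component_order; have [c0 cpa cbp] := c_bounds.
have acb : a + c <= b - c by lra.
have h0 := hm W; rewrite B_W in h0.
have W1 : W + 1 != W by rewrite gt_eqF // ltrDl.
have W2 : W - 1 != W by rewrite lt_eqF // gtrBl.
have h1 := hm (W + 1); rewrite (B_other W1) intrD1 in h1.
have h2 := hm (W - 1); rewrite (B_other W2) intrB mulr1z in h2.
have C1 := canon_succ_le; have C2 := canon_pred_le.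
have Fa : F a = A W + a * W%:~R by apply: component_line; apply/andP; split; lra.
have Fb : F b = A W + b * W%:~R by apply: component_line; apply/andP; split; lra.
have [az|za] := leP a z; have [zb|bz] := leP z b; last by lra.
- have zab : a <= z <= b by rewrite az zb.
  rewrite (tent_in (ltW c0) acb zab) (component_line zab) -lerBlDl !le_min.
  by apply/and3P; split; lra.
- rewrite (tent_out (ltW c0) acb (or_intror (ltW bz))) addr0.
  apply: (inf_lines_ge F_inf_lines Oz) => v.
  by have [->|vW] := eqVneq v W; [lra | rewrite -B_other].
- rewrite (tent_out (ltW c0) acb (or_introl (ltW za))) addr0.
  apply: (inf_lines_ge F_inf_lines Oz) => v.
  by have [->|vW] := eqVneq v W; [lra | rewrite -B_other].
Qed.

Lemma Gp_glb z : Omega al be z ->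
  is_glb [set B v + z * v%:~R | v in [set: int]] (F z + tent a b c z).
Proof.
move=> Oz; split; first by move=> _ [v _ <-]; apply: tent_below_lines.
by move=> m Hm; apply: lines_below_tent => // v; apply: Hm; exists v.
Qed.

Lemma Gp_tent z : Omega al be z -> Gp al be p F z = F z + tent a b c z.
Proof. by move=> Oz; rewrite Gp_eq; apply: is_glb_inf; apply: Gp_glb. Qed.

Lemma Gp_inf_lines : inf_lines al be (Gp al be p F) B.
Proof. by move=> z Oz; rewrite Gp_tent //; apply: Gp_glb. Qed.

End Component.

Theorem mainTheorem3 (R : realType) (al be : R) (F : R -> R) (p a b : R) :
  al < be ->
  trop_poly al be F ->
  al < p < be -> ~ nonsmooth al be F p ->
  connected_component ([set x | al < x < be] `\` nonsmooth al be F) p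
    = [set x | a < x < b] ->
  let c := Num.min (p - a) (b - p) in
  trop_poly al be (Gp al be p F) /\
  (forall x, Omega al be x ->
     MF al be (Gp al be p F) x =
     (MF al be F x - kdelta a x - kdelta b x
        + kdelta (a + c) x + kdelta (b - c) x)%E).
Proof.
move=> _ HF Hp Hps Hcomp c.
have [alA ap pb bbe] := component_order Hp Hps Hcomp.
have [c0 cpa cbp] := c_bounds Hp Hps Hcomp.
have acb : a + c <= b - c by rewrite /c; lra.
have HFA := F_inf_lines HF Hp.
have HG := Gp_inf_lines HF Hp Hps Hcomp.
have GF := Gp_tent HF Hp Hps Hcomp.
have [[F0 [Fal [Fbe _]]] Ffin] := HF.
split; last exact: MF_tent_perturb HFA Ffin HG GF.
split; last exact: finite_nonsmooth_tent_perturb HFA Ffin HG GF.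
split; [|split; [|split]].
- move=> z Oz; rewrite GF //; have := F0 z Oz.
  by have := tent_ge0 z (ltW c0) acb; lra.
- rewrite GF ?Fal ?(tent_out (ltW c0) acb) ?addr0 //; first by left.
  by apply/andP; split; lra.
- rewrite GF ?Fbe ?(tent_out (ltW c0) acb) ?addr0 //; first by right.
  by apply/andP; split; lra.
- by eexists; exact: HG.
Qed.
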